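(* Let $\kappa>0$, $m>0$, and let $L_{\kappa,m}$ be as in the context. Suppose $\delta\in(0,1)$ and $0<\rho_1<\rho_2<\min\{R_\kappa,m\delta\}$. Then with $\beta=\sqrt{1-\delta^2}$, \[\frac{L_{\kappa,m}(\rho_2)}{L_{\kappa,m}(\rho_1)}\ge\frac12\left[\left(\frac{\rho_2}{\rho_1}\right)^{\beta m}-\left(\frac{\rho_2}{\rho_1}\right)^{-\beta m}\right].\]
   Context: For $\kappa>0$: $\sin_\kappa(\rho)=\sin(\sqrt{\kappa}\rho)/\sqrt{\kappa}$, $\cos_\kappa=(\sin_\kappa)'$, $R_\kappa=\pi/(2\sqrt{\kappa})$. $L_{\kappa,m}$ is a solution of \[\sin_\kappa^2(\rho)L''(\rho)+\sin_\kappa(\rho)\cos_\kappa(\rho)L'(\rho)+(\sin_\kappa^2(\rho)-m^2)L(\rho)=0\] that is well defined (regular) at $\rho=0$ and positive on some interval $(0,\varepsilon)$. *)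

From Stdlib Require Import Reals.
From Coquelicot Require Import Coquelicot.
Open Scope R_scope.

Definition sin_k (kappa rho : R) : R := sin (sqrt kappa * rho) / sqrt kappa.
Definition cos_k (kappa rho : R) : R := cos (sqrt kappa * rho).
Definition R_k (kappa : R) : R := PI / (2 * sqrt kappa).

Definition is_L (kappa m : R) (L : R -> R) : Prop :=
  (exists dL ddL : R -> R,
      forall rho, 0 < rho < R_k kappa ->
        is_derive L rho (dL rho) /\ is_derive dL rho (ddL rho) /\
        (sin_k kappa rho)^2 * ddL rho
        + sin_k kappa rho * cos_k kappa rho * dL rho
        + ((sin_k kappa rho)^2 - m^2) * L rho = 0)
  /\ filterlim L (at_right 0) (locally (L 0))
  /\ (exists eps, 0 < eps /\ forall rho, 0 < rho < eps -> 0 < L rho).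

From Stdlib Require Import Reals Lra.
From Coquelicot Require Import Coquelicot.
Open Scope R_scope.

(* With s = sin_k and a = m sqrt (1 - delta^2), put psi = s L' - a L.  The equation
   gives (t^a psi)' >= 0 wherever L > 0 > psi and s(t) < m delta.  So a negative value
   psi(r0) would persist as t^a psi(t) <= r0^a psi(r0) down to 0 and force
   L' <= - K t^(-a-1) there, making L unbounded at 0 against its regularity.  Hence
   psi >= 0, which keeps L positive, and since s <= t we get t L' >= s L' >= a L: the
   function L / t^a is nondecreasing, so L(rho2) / L(rho1) >= (rho2 / rho1)^a, which
   dominates the stated bound. *)

Lemma continuity_pt_pos_near f z :
  continuity_pt f z -> 0 < f z ->
  exists d, 0 < d /\ forall y, Rabs (y - z) < d -> 0 < f y.
Proof.
  intros Hc Hz. destruct (Hc (f z) Hz) as [d [Hd Hnear]].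
  exists d. split; [exact Hd|]. intros y Hy.
  destruct (Req_dec y z) as [->|Hne]; [exact Hz|].
  assert (Hdist : Rabs (f y - f z) < f z) by (apply (Hnear y); repeat split; auto).
  apply Rabs_def2 in Hdist. lra.
Qed.

Lemma continuity_pt_of_is_derive f x l : is_derive f x l -> continuity_pt f x.
Proof. intros H. apply derivable_continuous_pt. exists l. apply is_derive_Reals, H. Qed.

Lemma exists_last_nonpos f a b :
  a < b -> (forall x, a <= x <= b -> continuity_pt f x) -> f a <= 0 -> 0 < f b ->
  exists z, a <= z < b /\ f z <= 0 /\ forall t, z < t <= b -> 0 < f t.
Proof.
  intros Hab Hc Ha Hb.
  set (E := fun t => a <= t <= b /\ f t <= 0).
  destruct (completeness E) as [z [Hub Hleast]].
  - exists b. intros t [Ht _]. lra.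
  - exists a. split; [lra|exact Ha].
  - assert (Hza : a <= z) by (apply Hub; split; [lra|exact Ha]).
    assert (Hzb : z <= b) by (apply Hleast; intros t [Ht _]; lra).
    assert (Hright : forall t, z < t <= b -> 0 < f t).
    { intros t Ht. apply Rnot_le_lt. intros Hft.
      assert (t <= z) by (apply Hub; split; [lra|exact Hft]). lra. }
    assert (Hfz : f z <= 0).
    { apply Rnot_lt_le. intros Hfz.
      destruct (continuity_pt_pos_near f z (Hc z (conj Hza Hzb)) Hfz) as [d [Hd Hnear]].
      assert (z <= z - d / 2); [|lra].
      apply Hleast. intros e [He Hfe]. apply Rnot_lt_le. intros Hlt.
      assert (e <= z) by (apply Hub; split; assumption).
      assert (0 < f e) by (apply Hnear, Rabs_def1; lra). lra. }
    exists z. split; [split; [exact Hza|]|split; assumption].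
    destruct (Req_dec z b) as [->|]; lra.
Qed.

Lemma exists_first_nonpos f a b :
  a < b -> (forall x, a <= x <= b -> continuity_pt f x) -> 0 < f a -> f b <= 0 ->
  exists z, a < z <= b /\ f z <= 0 /\ forall t, a <= t < z -> 0 < f t.
Proof.
  intros Hab Hc Ha Hb.
  destruct (exists_last_nonpos (fun t => f (a + b - t)) a b Hab)
    as [z [Hz [Hfz Hright]]].
  - intros x Hx. apply (continuity_pt_comp (fun t => a + b - t) f); [reg|].
    apply Hc. lra.
  - replace (a + b - a) with b by ring. exact Hb.
  - replace (a + b - b) with a by ring. exact Ha.
  - exists (a + b - z). split; [lra|split; [exact Hfz|]].
    intros t Ht. replace t with (a + b - (a + b - t)) by ring. apply Hright. lra.
Qed.

Lemma nondecreasing_of_derive_nonneg f df x y :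
  x <= y -> (forall t, x <= t <= y -> is_derive f t (df t)) ->
  (forall t, x < t < y -> 0 <= df t) -> f x <= f y.
Proof.
  intros Hxy Hd Hpos. destruct (Req_dec x y) as [<-|Hne]; [lra|].
  destruct (MVT_cor2 f df x y) as [c [Hmvt Hc]].
  - lra.
  - intros c Hc. apply is_derive_Reals, Hd, Hc.
  - assert (0 <= df c * (y - x)) by (apply Rmult_le_pos; [apply Hpos, Hc|lra]). lra.
Qed.

Lemma le_of_derive_nonneg_while_neg phi dphi x r :
  x <= r -> (forall t, x <= t <= r -> is_derive phi t (dphi t)) ->
  phi r < 0 -> (forall t, x < t < r -> phi t < 0 -> 0 <= dphi t) ->
  phi x <= phi r.
Proof.
  intros Hxr Hd Hr Hmono. apply Rnot_lt_le. intros Hx.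
  assert (Hlt : x < r) by (destruct (Req_dec x r) as [->|]; lra).
  set (lam := (phi r + Rmin (phi x) 0) / 2).
  assert (phi r < Rmin (phi x) 0) by (apply Rmin_glb_lt; lra).
  pose proof (Rmin_l (phi x) 0). pose proof (Rmin_r (phi x) 0).
  destruct (exists_last_nonpos (fun t => lam - phi t) x r Hlt)
    as [z [Hz [Hlz Habove]]]; [| unfold lam; lra | unfold lam; lra |].
  - intros t Ht. apply continuity_pt_minus; [apply continuity_pt_const; now intros ? ?|].
    apply (continuity_pt_of_is_derive _ _ _ (Hd t Ht)).
  - assert (phi z <= phi r); [|unfold lam in *; lra].
    apply nondecreasing_of_derive_nonneg with dphi; [lra| intros t Ht; apply Hd; lra|].
    intros t Ht. apply Hmono; [lra|]. specialize (Habove t (ltac:(lra))).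
    unfold lam in *. lra.
Qed.

Lemma Rpower_pos x y : 0 < Rpower x y.
Proof. apply exp_pos. Qed.

Lemma is_derive_Rpower_l y x :
  0 < x -> is_derive (fun t => Rpower t y) x (y * Rpower x (y - 1)).
Proof. intros Hx. apply is_derive_Reals, derivable_pt_lim_power, Hx. Qed.

Lemma Rpower_minus_1 x y : 0 < x -> Rpower x (y - 1) = Rpower x y / x.
Proof.
  intros Hx. unfold Rminus. rewrite Rpower_plus, Rpower_Ropp, Rpower_1 by exact Hx.
  reflexivity.
Qed.

Lemma Rpower_neg_pred t y : 0 < t -> Rpower t (- y - 1) = / (Rpower t y * t).
Proof.
  intros Ht. pose proof (Rpower_pos t y).
  rewrite Rpower_minus_1, Rpower_Ropp by exact Ht. field. lra.
Qed.

Lemma Rpower_div_l x y a : 0 < x -> 0 < y -> Rpower (y / x) a = Rpower y a / Rpower x a.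
Proof.
  intros Hx Hy. unfold Rpower. rewrite ln_div by assumption. unfold Rdiv.
  rewrite <- exp_Ropp, <- exp_plus. f_equal. ring.
Qed.

Lemma exists_Rpower_lt a B y :
  0 < a -> 0 < B -> 0 < y -> exists x, 0 < x < y /\ Rpower x a < B.
Proof.
  intros Ha HB Hy. pose proof (Rpower_pos B (/ a)) as Hroot.
  exists (Rmin (y / 2) (Rpower B (/ a) / 2)).
  pose proof (Rmin_l (y / 2) (Rpower B (/ a) / 2)).
  pose proof (Rmin_r (y / 2) (Rpower B (/ a) / 2)).
  assert (0 < Rmin (y / 2) (Rpower B (/ a) / 2)) by (apply Rmin_glb_lt; lra).
  split; [lra|].
  replace B with (Rpower (Rpower B (/ a)) a) at 2
    by (rewrite Rpower_mult, Rinv_l, Rpower_1; lra).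
  apply Rlt_Rpower_l; lra.
Qed.

Lemma unbounded_of_derive_le_neg_power f df a K x1 :
  0 < a -> 0 < K -> 0 < x1 ->
  (forall t, 0 < t <= x1 -> is_derive f t (df t)) ->
  (forall t, 0 < t <= x1 -> df t <= - K * Rpower t (- a - 1)) ->
  forall B, exists x, 0 < x < x1 /\ B < f x.
Proof.
  intros Ha HK Hx1 Hd Hdf B.
  set (h := fun t => K / a * Rpower t (- a) - f t).
  assert (Hh : forall x, 0 < x <= x1 -> h x <= h x1).
  { intros x Hx.
    apply nondecreasing_of_derive_nonneg
      with (fun t => K / a * (- a * Rpower t (- a - 1)) - df t); [lra| |].
    - intros t Ht. apply (is_derive_minus (fun t => K / a * Rpower t (- a)) f).
      + apply is_derive_scal, is_derive_Rpower_l. lra.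
      + apply Hd. lra.
    - intros t Ht. specialize (Hdf t (ltac:(lra))).
      replace (K / a * (- a * Rpower t (- a - 1))) with (- K * Rpower t (- a - 1))
        by (field; lra). lra. }
  set (C := Rabs (B + h x1) + 1).
  assert (HC : 0 < C) by (unfold C; pose proof (Rabs_pos (B + h x1)); lra).
  destruct (exists_Rpower_lt a (K / a / C) x1 Ha) as [x [Hx Hxa]]; [|exact Hx1|].
  { apply Rdiv_lt_0_compat; [apply Rdiv_lt_0_compat|]; lra. }
  exists x. split; [exact Hx|].
  assert (Hhx : K / a * Rpower x (- a) - f x <= h x1) by (apply Hh; lra).
  rewrite Rpower_Ropp in Hhx. pose proof (Rpower_pos x a) as Hp.
  assert (C < K / a * / Rpower x a).
  { apply Rmult_lt_reg_r with (Rpower x a); [exact Hp|].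
    apply Rmult_lt_compat_r with (r := C) in Hxa; [|exact HC].
    replace (K / a * / Rpower x a * Rpower x a) with (K / a) by (field; lra).
    replace (K / a / C * C) with (K / a) in Hxa by (field; lra). lra. }
  pose proof (Rle_abs (B + h x1)). unfold C in *. lra.
Qed.

Lemma at_right_bounded_above f x l :
  filterlim f (at_right x) (locally l) ->
  exists d M, 0 < d /\ 0 < M /\ forall t, x < t < x + d -> f t < M.
Proof.
  intros Hlim. destruct (proj1 (filterlim_locally f l) Hlim (mkposreal 1 Rlt_0_1)) as [d Hd].
  exists d, (Rabs l + 1). split; [apply cond_pos|split; [pose proof (Rabs_pos l); lra|]].
  intros t Ht. assert (Hball : Rabs (f t - l) < 1).
  { apply (Hd t); [|lra]. change (Rabs (t - x) < d). rewrite Rabs_right; lra. }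
  apply Rabs_def2 in Hball. pose proof (Rle_abs l). lra.
Qed.

Lemma sin_k_pos_le kappa t :
  0 < kappa -> 0 < t < R_k kappa -> 0 < sin_k kappa t <= t.
Proof.
  intros Hk Ht. unfold sin_k. unfold R_k in Ht.
  assert (Hsk : 0 < sqrt kappa) by (apply sqrt_lt_R0, Hk).
  assert (Hangle : 0 < sqrt kappa * t < PI / 2).
  { split; [nra|].
    replace (PI / 2) with (sqrt kappa * (PI / (2 * sqrt kappa))) by (field; lra).
    apply Rmult_lt_compat_l; lra. }
  pose proof PI_RGT_0.
  assert (0 < sin (sqrt kappa * t)) by (apply sin_gt_0; lra).
  assert (sin (sqrt kappa * t) < sqrt kappa * t) by (apply sin_lt_x; lra).
  split; [apply Rdiv_lt_0_compat; assumption|].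
  apply Rmult_le_reg_l with (sqrt kappa); [exact Hsk|].
  replace (sqrt kappa * (sin (sqrt kappa * t) / sqrt kappa)) with (sin (sqrt kappa * t))
    by (field; lra).
  lra.
Qed.

Lemma is_derive_sin_k kappa t :
  0 < kappa -> is_derive (sin_k kappa) t (cos_k kappa t).
Proof.
  intros Hk. assert (0 < sqrt kappa) by (apply sqrt_lt_R0, Hk).
  unfold sin_k, cos_k. auto_derive; [exact I|]. field. lra.
Qed.

Section Growth_of_L.

Variables (kappa m a r : R) (L dL ddL : R -> R).

Hypothesis kappa_pos : 0 < kappa.
Hypothesis a_pos : 0 < a.
Hypothesis r_le_R_k : r <= R_k kappa.
Hypothesis a_r_le_m : a ^ 2 + r ^ 2 <= m ^ 2.
Hypothesis L_solves : forall t, 0 < t < r ->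
  is_derive L t (dL t) /\ is_derive dL t (ddL t) /\
  (sin_k kappa t)^2 * ddL t + sin_k kappa t * cos_k kappa t * dL t
  + ((sin_k kappa t)^2 - m^2) * L t = 0.
Hypothesis L_bounded_near_0 :
  exists d M, 0 < d /\ 0 < M /\ forall t, 0 < t < d -> L t < M.
Hypothesis L_pos_near_0 : exists eps, 0 < eps /\ forall t, 0 < t < eps -> 0 < L t.

Let psi t := sin_k kappa t * dL t - a * L t.
Let dpsi t := cos_k kappa t * dL t + sin_k kappa t * ddL t - a * dL t.

Lemma sin_k_bounds t : 0 < t < r -> 0 < sin_k kappa t <= t.
Proof. intros Ht. apply sin_k_pos_le; [exact kappa_pos|lra]. Qed.

Lemma is_derive_psi t : 0 < t < r -> is_derive psi t (dpsi t).
Proof.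
  intros Ht. destruct (L_solves t Ht) as [HdL [HddL _]].
  unfold psi, dpsi.
  apply (is_derive_minus (fun t => sin_k kappa t * dL t) (fun t => a * L t)).
  - apply (Derive.is_derive_mult (sin_k kappa) dL);
      [apply is_derive_sin_k, kappa_pos|exact HddL].
  - apply is_derive_scal, HdL.
Qed.

(* The equation gives s (a psi / t + psi') = (m^2 - a^2 - s^2) L + a psi (s / t - 1)
   with s = sin_k t; both terms are nonnegative when L > 0 > psi, as s <= t < r. *)
Lemma psi_growth t :
  0 < t < r -> 0 < L t -> psi t < 0 -> 0 <= a * psi t / t + dpsi t.
Proof.
  intros Ht HLt Hpsi. destruct (sin_k_bounds t Ht) as [Hs Hst].
  destruct (L_solves t Ht) as [_ [_ Hode]].
  set (s := sin_k kappa t) in *.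
  assert (Hid : s * (a * psi t / t + dpsi t)
                = (m ^ 2 - a ^ 2 - s ^ 2) * L t + a * psi t * (s / t - 1)
                  + (s ^ 2 * ddL t + s * cos_k kappa t * dL t + (s ^ 2 - m ^ 2) * L t))
    by (unfold psi, dpsi; fold s; field; lra).
  rewrite Hode, Rplus_0_r in Hid.
  assert (Hgap : 0 < m ^ 2 - a ^ 2 - s ^ 2).
  { assert (s ^ 2 < r ^ 2) by (rewrite <- !Rsqr_pow2; apply Rsqr_incrst_1; lra).
    pose proof a_r_le_m. lra. }
  assert (Hratio : s / t - 1 <= 0).
  { apply Rmult_le_reg_r with t; [lra|].
    replace ((s / t - 1) * t) with (s - t) by (field; lra). lra. }
  assert (0 <= (m ^ 2 - a ^ 2 - s ^ 2) * L t) by (apply Rmult_le_pos; lra).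
  assert (0 <= - (a * psi t) * - (s / t - 1)) by (apply Rmult_le_pos; nra).
  apply Rmult_le_reg_l with s; [exact Hs|]. lra.
Qed.

Lemma is_derive_Rpower_psi t :
  0 < t < r ->
  is_derive (fun u => Rpower u a * psi u) t (Rpower t a * (a * psi t / t + dpsi t)).
Proof.
  intros Ht.
  replace (Rpower t a * (a * psi t / t + dpsi t))
    with (a * Rpower t (a - 1) * psi t + Rpower t a * dpsi t)
    by (rewrite Rpower_minus_1 by lra; field; lra).
  apply (Derive.is_derive_mult (fun u => Rpower u a) psi).
  - apply is_derive_Rpower_l. lra.
  - apply is_derive_psi, Ht.
Qed.

Lemma Rpower_psi_le r0 x :
  0 < x <= r0 -> r0 < r -> (forall t, 0 < t <= r0 -> 0 < L t) -> psi r0 < 0 ->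
  Rpower x a * psi x <= Rpower r0 a * psi r0.
Proof.
  intros Hx Hr0 HL Hpsi.
  pose proof (Rpower_pos r0 a).
  apply (le_of_derive_nonneg_while_neg (fun u => Rpower u a * psi u)
           (fun u => Rpower u a * (a * psi u / u + dpsi u))); [lra| |nra|].
  - intros t Ht. apply is_derive_Rpower_psi. lra.
  - intros t Ht Hneg. pose proof (Rpower_pos t a).
    apply Rmult_le_pos; [lra|]. apply psi_growth; [lra|apply HL; lra|nra].
Qed.

Lemma dL_le_neg_power r0 :
  0 < r0 < r -> (forall t, 0 < t <= r0 -> 0 < L t) -> psi r0 < 0 ->
  exists K, 0 < K /\ forall y, 0 < y ->
    exists x1, 0 < x1 < y /\ forall t, 0 < t <= x1 -> dL t <= - K * Rpower t (- a - 1).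
Proof.
  intros Hr0 HL Hpsi.
  destruct L_bounded_near_0 as [d [M [Hd [HM HLM]]]].
  set (K := - (Rpower r0 a * psi r0) / 2).
  assert (HK : 0 < K) by (unfold K; pose proof (Rpower_pos r0 a); nra).
  exists K. split; [exact HK|]. intros y Hy.
  destruct (exists_Rpower_lt a (K / (a * M)) (Rmin y (Rmin d r0)) a_pos)
    as [x1 [Hx1 Hx1a]].
  { apply Rdiv_lt_0_compat; [exact HK|nra]. }
  { repeat apply Rmin_glb_lt; lra. }
  pose proof (Rmin_l y (Rmin d r0)). pose proof (Rmin_r y (Rmin d r0)).
  pose proof (Rmin_l d r0). pose proof (Rmin_r d r0).
  exists x1. split; [lra|]. intros t Ht.
  assert (Htr : 0 < t < r) by lra.
  destruct (sin_k_bounds t Htr) as [Hs Hst].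
  pose proof (Rpower_pos t a) as Hta.
  assert (HLt : 0 < L t < M) by (split; [apply HL|apply HLM]; lra).
  assert (Hpsi_t : Rpower t a * psi t <= - 2 * K)
    by (unfold K; pose proof (Rpower_psi_le r0 t (ltac:(lra)) (proj2 Hr0) HL Hpsi); lra).
  assert (HtaL : a * (Rpower t a * L t) <= K).
  { assert (Rpower t a <= Rpower x1 a) by (apply Rle_Rpower_l; lra).
    assert (Rpower t a * L t <= K / (a * M) * M) by (apply Rmult_le_compat; lra).
    replace K with (a * (K / (a * M) * M)) by (field; lra).
    apply Rmult_le_compat_l; lra. }
  assert (Hsd : Rpower t a * (sin_k kappa t * dL t) <= - K)
    by (unfold psi in Hpsi_t; nra).
  assert (HdL : dL t < 0).
  { apply Rnot_le_lt. intros HdL.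
    assert (0 <= Rpower t a * (sin_k kappa t * dL t))
      by (apply Rmult_le_pos; [|apply Rmult_le_pos]; lra).
    lra. }
  assert (Htd : Rpower t a * t * dL t <= - K).
  { assert (0 <= Rpower t a * ((t - sin_k kappa t) * - dL t))
      by (apply Rmult_le_pos; [|apply Rmult_le_pos]; lra).
    nra. }
  rewrite Rpower_neg_pred by lra.
  pose proof (Rmult_lt_0_compat _ _ Hta (proj1 Ht)).
  apply Rmult_le_reg_l with (Rpower t a * t); [assumption|].
  replace (Rpower t a * t * (- K * / (Rpower t a * t))) with (- K) by (field; lra).
  lra.
Qed.

Lemma psi_nonneg r0 :
  0 < r0 < r -> (forall t, 0 < t <= r0 -> 0 < L t) -> 0 <= psi r0.
Proof.
  intros Hr0 HL. apply Rnot_lt_le. intros Hpsi.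
  destruct L_bounded_near_0 as [d [M [Hd [HM HLM]]]].
  destruct (dL_le_neg_power r0 Hr0 HL Hpsi) as [K [HK Hnear]].
  destruct (Hnear (Rmin d r0)) as [x1 [Hx1 HdL]]; [apply Rmin_glb_lt; lra|].
  pose proof (Rmin_l d r0). pose proof (Rmin_r d r0).
  destruct (unbounded_of_derive_le_neg_power L dL a K x1 a_pos HK (proj1 Hx1))
    with (B := M) as [x [Hx HLx]].
  - intros t Ht. apply L_solves. lra.
  - exact HdL.
  - assert (L x < M) by (apply HLM; lra). lra.
Qed.

Lemma dL_pos t : 0 < t < r -> 0 < L t -> 0 <= psi t -> 0 < dL t.
Proof.
  intros Ht HLt Hpsi. destruct (sin_k_bounds t Ht) as [Hs _].
  unfold psi in Hpsi. apply Rnot_le_lt. intros HdL.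
  assert (0 <= sin_k kappa t * - dL t) by (apply Rmult_le_pos; lra). nra.
Qed.

Lemma L_pos t : 0 < t < r -> 0 < L t.
Proof.
  intros Ht. apply Rnot_le_lt. intros HLt.
  destruct L_pos_near_0 as [eps [Heps Hpos]].
  set (x0 := Rmin eps t / 2).
  assert (Hx0 : 0 < x0 < eps /\ x0 < t)
    by (unfold x0; pose proof (Rmin_l eps t); pose proof (Rmin_r eps t);
        assert (0 < Rmin eps t) by (apply Rmin_glb_lt; lra); lra).
  destruct (exists_first_nonpos L x0 t) as [z [Hz [HLz Hbefore]]];
    [lra| |apply Hpos; lra|exact HLt|].
  { intros u Hu. apply (continuity_pt_of_is_derive _ _ (dL u)), L_solves. lra. }
  assert (HL0z : forall u, 0 < u < z -> 0 < L u).
  { intros u Hu. destruct (Rlt_or_le u x0); [apply Hpos|apply Hbefore]; lra. }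
  assert (L x0 <= L z); [|pose proof (Hpos x0 (ltac:(lra))); lra].
  apply nondecreasing_of_derive_nonneg with dL; [lra| intros u Hu; apply L_solves; lra|].
  intros u Hu. apply Rlt_le, dL_pos; [lra|apply HL0z; lra|].
  apply psi_nonneg; [lra|]. intros v Hv. apply HL0z. lra.
Qed.

Lemma L_Rpower_nondecreasing x y :
  0 < x <= y -> y < r -> L x * Rpower x (- a) <= L y * Rpower y (- a).
Proof.
  intros Hxy Hyr.
  apply (nondecreasing_of_derive_nonneg (fun t => L t * Rpower t (- a))
           (fun t => dL t * Rpower t (- a) + L t * (- a * Rpower t (- a - 1)))); [lra| |].
  - intros t Ht. apply (Derive.is_derive_mult L (fun u => Rpower u (- a))).
    + apply L_solves. lra.
    + apply is_derive_Rpower_l. lra.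
  - intros t Ht. assert (Htr : 0 < t < r) by lra.
    pose proof (L_pos t Htr) as HLt.
    assert (Hpsi : 0 <= psi t) by (apply psi_nonneg; [lra|intros; apply L_pos; lra]).
    pose proof (dL_pos t Htr HLt Hpsi). destruct (sin_k_bounds t Htr) as [_ Hst].
    rewrite Rpower_Ropp, Rpower_neg_pred by lra.
    pose proof (Rpower_pos t a).
    replace (dL t * / Rpower t a + L t * (- a * / (Rpower t a * t)))
      with ((t * dL t - a * L t) / (Rpower t a * t)) by (field; lra).
    assert (0 <= (t - sin_k kappa t) * dL t) by (apply Rmult_le_pos; lra).
    unfold psi in Hpsi. unfold Rdiv. apply Rmult_le_pos; [lra|].
    apply Rlt_le, Rinv_0_lt_compat, Rmult_lt_0_compat; lra.
Qed.

Lemma Rpower_ratio_le_L_ratio x y :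
  0 < x <= y -> y < r -> Rpower (y / x) a <= L y / L x.
Proof.
  intros Hxy Hyr.
  pose proof (L_Rpower_nondecreasing x y Hxy Hyr) as Hmono.
  pose proof (L_pos x (ltac:(lra))). pose proof (L_pos y (ltac:(lra))).
  pose proof (Rpower_pos x a). pose proof (Rpower_pos y a).
  rewrite !Rpower_Ropp in Hmono.
  rewrite Rpower_div_l by lra.
  apply Rmult_le_reg_r with (L x * / Rpower y a).
  { apply Rmult_lt_0_compat; [lra|apply Rinv_0_lt_compat; lra]. }
  replace (Rpower y a / Rpower x a * (L x * / Rpower y a)) with (L x * / Rpower x a)
    by (field; lra).
  replace (L y / L x * (L x * / Rpower y a)) with (L y * / Rpower y a) by (field; lra).
  exact Hmono.
Qed.

End Growth_of_L.

Theorem mainTheorem4 (kappa m delta rho1 rho2 : R) (L : R -> R) :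
  0 < kappa -> 0 < m -> is_L kappa m L ->
  0 < delta < 1 ->
  0 < rho1 -> rho1 < rho2 -> rho2 < Rmin (R_k kappa) (m * delta) ->
  L rho2 / L rho1 >=
  / 2 * (Rpower (rho2 / rho1) (sqrt (1 - delta ^ 2) * m)
         - Rpower (rho2 / rho1) (- (sqrt (1 - delta ^ 2) * m))).
Proof.
  intros Hk Hm [[dL [ddL Hode]] [Hcont Hnear0]] Hdelta H1 H12 H2.
  set (a := sqrt (1 - delta ^ 2) * m).
  set (r := Rmin (R_k kappa) (m * delta)) in H2.
  assert (Hr_R : r <= R_k kappa) by apply Rmin_l.
  assert (Hr_m : r <= m * delta) by apply Rmin_r.
  assert (Hbeta : sqrt (1 - delta ^ 2) ^ 2 = 1 - delta ^ 2)
    by (rewrite <- Rsqr_pow2; apply Rsqr_sqrt; nra).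
  assert (Ha : 0 < a) by (apply Rmult_lt_0_compat; [apply sqrt_lt_R0; nra|exact Hm]).
  assert (Ha_r : a ^ 2 + r ^ 2 <= m ^ 2).
  { assert (r ^ 2 <= (m * delta) ^ 2) by (apply pow_incr; lra).
    unfold a. rewrite Rpow_mult_distr, Hbeta. nra. }
  assert (Hbound : exists d M, 0 < d /\ 0 < M /\ forall t, 0 < t < d -> L t < M).
  { destruct (at_right_bounded_above L 0 (L 0) Hcont) as [d [M [Hd [HM HLM]]]].
    exists d, M. split; [exact Hd|split; [exact HM|]].
    intros t Ht. apply HLM. lra. }
  assert (Hratio : Rpower (rho2 / rho1) a <= L rho2 / L rho1).
  { apply (Rpower_ratio_le_L_ratio kappa m a r L dL ddL); try assumption; [|lra].
    intros t Ht. apply Hode. lra. }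
  rewrite Rpower_Ropp.
  pose proof (Rpower_pos (rho2 / rho1) a).
  pose proof (Rinv_0_lt_compat _ (Rpower_pos (rho2 / rho1) a)).
  lra.
Qed.
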